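(* Let $\Sigma$ be a signature, $T$ a monad on sets carrying a continuous $\Sigma$-algebra structure, and $\Gamma$ a relator for the monad $T$ that is inductive and respects $\Sigma$. Then two-way similarity $\simeq_\Gamma$ is a congruence (its open extension is a compatible equivalence relation) and is sound for contextual equivalence: $\simeq_\Gamma^\circ\subseteq\ \equiv_\Gamma$. Moreover, $\Gamma$-bisimilarity is also sound for contextual equivalence: $\sim_\Gamma^\circ\subseteq\ \equiv_\Gamma$.
   Context: An $\omega$CPPO is a poset with least element $\bot$ in which every $\omega$-chain has a lub; continuous = monotone and preserving such lubs. $T$ (unit $\eta$, bind $u\texttt{>>=}f$) carries a continuous $\Sigma$-algebra structure if each $TX$ is an $\omega$CPPO, bind is continuous in both arguments, and each $\sigma\in\Sigma$ of arity $k$ is interpreted by a continuous $\sigma^T:(TX)^k\to TX$. A relator $\Gamma$ for $T$ assigns to each $R\subseteq X\times Y$ a relation $\Gamma R\subseteq TX\times TY$ with: $=_{TX}\subseteq\Gamma(=_X)$; $\Gamma S\circ\Gamma R\subseteq\Gamma(S\circ R)$; $\Gamma((f\times g)^{-1}R)=(Tf\times Tg)^{-1}\Gamma R$ with $(f\times g)^{-1}R=\{(z,w)\mid f(z)\,R\,g(w)\}$; monotone in $R$; $x\,R\,y\Rightarrow\eta(x)\,\Gamma R\,\eta(y)$; if $x\,R\,y\Rightarrow f(x)\,\Gamma S\,g(y)$ for all $x,y$ then $u\,\Gamma R\,v\Rightarrow(u\texttt{>>=}f)\,\Gamma S\,(v\texttt{>>=}g)$. Inductive: $\bot\,\Gamma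 R\,v$ always, and $(\forall n.\ u_n\,\Gamma R\,v)\Rightarrow\bigsqcup_n u_n\,\Gamma R\,v$ for $\omega$-chains. Respects $\Sigma$: $u_i\,\Gamma R\,v_i$ for all $i$ implies $\sigma^T(\vec u)\,\Gamma R\,\sigma^T(\vec v)$. $\Gamma^c(R)=(\Gamma(R^c))^c$ with $R^c$ the converse; $(\Gamma\cap\Gamma^c)(R)=\Gamma R\cap\Gamma^cR$. Terms/values: $M,N::=\mathsf{return}\,V\mid VW\mid(M\ \mathsf{to}\ x.N)\mid\sigma(M_1,\dots,M_{\alpha(\sigma)})$, $V,W::=x\mid\lambda x.M$, modulo $\alpha$-equivalence; $\mathcal{T}_0,\mathcal{V}_0$ closed terms/values; $\mathcal{T}(\bar x),\mathcal{V}(\bar x)$ those with free variables in $\bar x$. $[\![M]\!]=\bigsqcup_nM^{(n)}$ where $M^{(0)}=\bot$, $(\mathsf{return}\,V)^{(n+1)}=\eta(V)$, $((\lambda x.M)V)^{(n+1)}=(M[V/x])^{(n)}$, $(M\ \mathsf{to}\ x.N)^{(n+1)}=M^{(n)}\texttt{>>=}(V\mapsto(N[V/x])^{(n)})$, $(\sigma(\vec M))^{(n+1)}=\sigma^T(M_1^{(n)},\dots)$. For a relator $\Delta$, a closed relation $R=(R_{\mathcal{T}}\subseteq\mathcal{T}_0^2,R_{\mathcal{V}}\subseteq\mathcal{V}_0^2)$ is an applicative $\Delta$-simulation if $M\,R_{\mathcal{T}}\,N\Rightarrow[\![M]\!]\,\Delta R_{\mathcal{V}}\,[\![N]\!]$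 and $V\,R_{\mathcal{V}}\,W\Rightarrow VU\,R_{\mathcal{T}}\,WU$ for all closed $U$. $\precsim_\Gamma$ is the largest applicative $\Gamma$-simulation; two-way similarity is $\simeq_\Gamma=\precsim_\Gamma\cap(\precsim_\Gamma)^c$; $\Gamma$-bisimilarity $\sim_\Gamma$ is the largest applicative $(\Gamma\cap\Gamma^c)$-simulation. The open extension $R^\circ$ of a closed relation: $\bar x\vdash M\,R^\circ\,N$ iff $M,N\in\mathcal{T}(\bar x)$ and $M[\bar V/\bar x]\,R\,N[\bar V/\bar x]$ for all closed values $\bar V$ (similarly for values). A $\lambda$-term relation is a pair of sets of triples $(\bar x,M,N)$ with $M,N\in\mathcal{T}(\bar x)$, resp. $(\bar x,V,W)$ with $V,W\in\mathcal{V}(\bar x)$. Compatible: $\bar x\vdash x\,R_{\mathcal{V}}\,x$ for $x\in\bar x$; $\bar x\cup\{x\}\vdash M\,R_{\mathcal{T}}\,N$ ($x\notin\bar x$) implies $\bar x\vdash\lambda x.M\,R_{\mathcal{V}}\,\lambda x.N$; $\bar x\vdash V\,R_{\mathcal{V}}\,W$ implies $\bar x\vdash\mathsf{return}\,V\,R_{\mathcal{T}}\,\mathsf{return}\,W$; $\bar x\vdash V\,R_{\mathcal{V}}\,V'$, $\bar x\vdash W\,R_{\mathcal{V}}\,W'$ imply $\bar x\vdash VW\,R_{\mathcal{T}}\,V'W'$; $\bar x\vdash M\,R_{\mathcal{T}}\,M'$, $\bar x\cup\{x\}\vdash N\,R_{\mathcal{T}}\,N'$ ($x\notin\bar x$)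 imply $\bar x\vdash(M\ \mathsf{to}\ x.N)\,R_{\mathcal{T}}\,(M'\ \mathsf{to}\ x.N')$; $\bar x\vdash M_i\,R_{\mathcal{T}}\,N_i$ for all $i$ implies $\bar x\vdash\sigma(\vec M)\,R_{\mathcal{T}}\,\sigma(\vec N)$. A congruence is a compatible equivalence relation. With $\mathcal{U}=\mathcal{V}_0\times\mathcal{V}_0$, $R$ is $\Delta$-preadequate if for closed $M,N$, $\emptyset\vdash M\,R_{\mathcal{T}}\,N$ implies $[\![M]\!]\,\Delta\mathcal{U}\,[\![N]\!]$. $\leq_\Delta$ is the union of all compatible $\Delta$-preadequate $\lambda$-term relations, and $\equiv_\Gamma=\leq_{\Gamma\cap\Gamma^c}$. *)

From Stdlib Require Import Arith Bool.
From Stdlib Require Vectors.Fin.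


Definition rel (X Y : Type) := X -> Y -> Prop.

(* Syntax (de Bruijn indices: terms are taken modulo alpha-equivalence) *)
Section Syntax.
Variable Sig : Type.
Variable ar : Sig -> nat.

Inductive val : Type :=
| Var : nat -> val
| Lam : tm -> val
with tm : Type :=
| Ret : val -> tm
| App : val -> val -> tm
| To : tm -> tm -> tm            (* M to x.N : x is bound (index 0) in N *)
| Op : forall s : Sig, (Fin.t (ar s) -> tm) -> tm.

Definition up_ren (r : nat -> nat) (n : nat) : nat :=
  match n with 0 => 0 | S k => S (r k) end.

Fixpoint ren_val (r : nat -> nat) (v : val) : val :=
  match v with
  | Var n => Var (r n)
  | Lam M => Lam (ren_tm (up_ren r) M)
  end
with ren_tm (r : nat -> nat) (M : tm) : tm :=
  match M with
  | Ret V => Ret (ren_val r V)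
  | App V W => App (ren_val r V) (ren_val r W)
  | To M1 N => To (ren_tm r M1) (ren_tm (up_ren r) N)
  | Op s f => Op s (fun i => ren_tm r (f i))
  end.

Definition up_sub (sg : nat -> val) (n : nat) : val :=
  match n with 0 => Var 0 | S k => ren_val S (sg k) end.

Fixpoint subst_val (sg : nat -> val) (v : val) : val :=
  match v with
  | Var n => sg n
  | Lam M => Lam (subst_tm (up_sub sg) M)
  end
with subst_tm (sg : nat -> val) (M : tm) : tm :=
  match M with
  | Ret V => Ret (subst_val sg V)
  | App V W => App (subst_val sg V) (subst_val sg W)
  | To M1 N => To (subst_tm sg M1) (subst_tm (up_sub sg) N)
  | Op s f => Op s (fun i => subst_tm sg (f i))
  end.

Definition scons (V : val) (sg : nat -> val) (n : nat) : val :=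
  match n with 0 => V | S k => sg k end.

Definition subst1 (V : val) (M : tm) : tm := subst_tm (scons V Var) M.

Fixpoint fin_all (k : nat) : (Fin.t k -> bool) -> bool :=
  match k with
  | 0 => fun _ => true
  | S k' => fun p => p Fin.F1 && fin_all k' (fun i => p (Fin.FS i))
  end.

(* wf_tm n M : all free variables of M are among the n variables in scope,
   i.e. M is in T(x_0,...,x_{n-1}) *)
Fixpoint wf_val (n : nat) (v : val) : bool :=
  match v with
  | Var k => k <? n
  | Lam M => wf_tm (S n) M
  end
with wf_tm (n : nat) (M : tm) : bool :=
  match M with
  | Ret V => wf_val n V
  | App V W => wf_val n V && wf_val n W
  | To M1 N => wf_tm n M1 && wf_tm (S n) N
  | Op s f => fin_all (ar s) (fun i => wf_tm n (f i))
  end.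

Definition cval : Type := { v : val | wf_val 0 v = true }.

End Syntax.

Set Implicit Arguments.
Unset Strict Implicit.

Arguments val {Sig} ar.
Arguments tm {Sig} ar.
Arguments cval {Sig} ar.
Arguments up_sub {Sig ar} sg n.
Arguments ren_val {Sig ar} r v.
Arguments ren_tm {Sig ar} r M.
Arguments subst_val {Sig ar} sg v.
Arguments subst_tm {Sig ar} sg M.
Arguments scons {Sig ar} V sg n.
Arguments subst1 {Sig ar} V M.
Arguments wf_val {Sig ar} n v.
Arguments wf_tm {Sig ar} n M.
Arguments Var {Sig ar} n.
Arguments Lam {Sig ar} M.
Arguments Ret {Sig ar} V.
Arguments App {Sig ar} V W.
Arguments To {Sig ar} M N.
Arguments Op {Sig ar} s f.

Record CMonad (Sig : Type) (ar : Sig -> nat) := {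
  T : Type -> Type;
  eta : forall X : Type, X -> T X;
  bind : forall X Y : Type, T X -> (X -> T Y) -> T Y;
  le : forall X : Type, T X -> T X -> Prop;
  bot : forall X : Type, T X;
  lub : forall X : Type, (nat -> T X) -> T X; (* lub of w-chains *)
  op : forall (X : Type) (s : Sig), (Fin.t (ar s) -> T X) -> T X
}.

Arguments T {Sig ar} _ _.
Arguments eta {Sig ar} _ {X} _.
Arguments bind {Sig ar} _ {X Y} _ _.
Arguments le {Sig ar} _ {X} _ _.
Arguments bot {Sig ar} _ {X}.
Arguments lub {Sig ar} _ {X} _.
Arguments op {Sig ar} _ {X} _ _.

Section Semantics.
Variable Sig : Type.
Variable ar : Sig -> nat.
Variable M : CMonad ar.

Definition chain (X : Type) (u : nat -> T M X) : Prop :=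
  forall n, le M (u n) (u (S n)).

Definition is_monad : Prop :=
  (forall (X Y : Type) (x : X) (f : X -> T M Y), bind M (eta M x) f = f x) /\
  (forall (X : Type) (u : T M X), bind M u (fun x => eta M x) = u) /\
  (forall (X Y Z : Type) (u : T M X) (f : X -> T M Y) (g : Y -> T M Z),
      bind M (bind M u f) g = bind M u (fun x => bind M (f x) g)).

Definition is_wcppo : Prop :=
  forall X : Type,
    (forall u : T M X, le M u u) /\
    (forall u v w : T M X, le M u v -> le M v w -> le M u w) /\
    (forall u v : T M X, le M u v -> le M v u -> u = v) /\
    (forall u : T M X, le M (bot M) u) /\
    (forall u : nat -> T M X, chain u ->
       (forall n, le M (u n) (lub M u)) /\
       (forall z, (forall n, le M (u n) z) -> le M (lub M u) z)).

Definition bind_continuous : Prop :=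
  (forall (X Y : Type) (u u' : T M X) (f : X -> T M Y),
      le M u u' -> le M (bind M u f) (bind M u' f)) /\
  (forall (X Y : Type) (u : T M X) (f g : X -> T M Y),
      (forall x, le M (f x) (g x)) -> le M (bind M u f) (bind M u g)) /\
  (forall (X Y : Type) (u : nat -> T M X) (f : X -> T M Y),
      chain u -> bind M (lub M u) f = lub M (fun n => bind M (u n) f)) /\
  (forall (X Y : Type) (u : T M X) (f : nat -> X -> T M Y),
      (forall n x, le M (f n x) (f (S n) x)) ->
      bind M u (fun x => lub M (fun n => f n x)) = lub M (fun n => bind M u (f n))).

Definition ops_continuous : Prop :=
  (forall (X : Type) (s : Sig) (u v : Fin.t (ar s) -> T M X),
      (forall i, le M (u i) (v i)) -> le M (op M s u) (op M s v)) /\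
  (forall (X : Type) (s : Sig) (u : nat -> Fin.t (ar s) -> T M X),
      (forall n i, le M (u n i) (u (S n) i)) ->
      op M s (fun i => lub M (fun n => u n i)) = lub M (fun n => op M s (u n))).

Definition continuous_sigma_monad : Prop :=
  is_monad /\ is_wcppo /\ bind_continuous /\ ops_continuous.

Definition ret_sem (V : val ar) : T M (cval ar) :=
  match wf_val 0 V as b return wf_val 0 V = b -> T M (cval ar) with
  | true => fun e => eta M (exist _ V e)
  | false => fun _ => bot M
  end eq_refl.

Fixpoint approx (k : nat) (P : tm ar) : T M (cval ar) :=
  match k with
  | 0 => bot M
  | S k => match P with
      | Ret V => ret_sem V
      | App (Lam P') V => approx k (subst1 V P')
      | App (Var _) _ => bot M
      | To P1 P2 => bind M (approx k P1) (fun v => approx k (subst1 (proj1_sig v) P2))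
      | Op s f => op M s (fun i => approx k (f i))
      end
  end.

Definition sem (P : tm ar) : T M (cval ar) := lub M (fun k => approx k P).

Definition relT := forall X Y : Type, rel X Y -> rel (T M X) (T M Y).

Definition Tmap (X Y : Type) (f : X -> Y) (u : T M X) : T M Y :=
  bind M u (fun x => eta M (f x)).

Definition rcomp (X Y Z : Type) (R : rel X Y) (S : rel Y Z) : rel X Z :=
  fun x z => exists y, R x y /\ S y z.

Definition is_relator (G : relT) : Prop :=
  (forall (X : Type) (u : T M X), G X X (@eq X) u u) /\
  (forall (X Y Z : Type) (R : rel X Y) (S : rel Y Z) u v w,
      G X Y R u v -> G Y Z S v w -> G X Z (rcomp R S) u w) /\
  (forall (X' Y' X Y : Type) (f : X' -> X) (g : Y' -> Y) (R : rel X Y) u v,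
      G X' Y' (fun z w => R (f z) (g w)) u v <-> G X Y R (Tmap f u) (Tmap g v)) /\
  (forall (X Y : Type) (R S : rel X Y) u v,
      (forall x y, R x y -> S x y) -> G X Y R u v -> G X Y S u v) /\
  (forall (X Y : Type) (R : rel X Y) x y, R x y -> G X Y R (eta M x) (eta M y)) /\
  (forall (X Y X' Y' : Type) (R : rel X Y) (S : rel X' Y')
          (f : X -> T M X') (g : Y -> T M Y') u v,
      (forall x y, R x y -> G X' Y' S (f x) (g y)) ->
      G X Y R u v -> G X' Y' S (bind M u f) (bind M v g)).

Definition inductive (G : relT) : Prop :=
  (forall (X Y : Type) (R : rel X Y) (v : T M Y), G X Y R (bot M) v) /\
  (forall (X Y : Type) (R : rel X Y) (u : nat -> T M X) (v : T M Y),
      chain u -> (forall n, G X Y R (u n) v) -> G X Y R (lub M u) v).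

Definition respects_sigma (G : relT) : Prop :=
  forall (X Y : Type) (R : rel X Y) (s : Sig)
         (u : Fin.t (ar s) -> T M X) (v : Fin.t (ar s) -> T M Y),
    (forall i, G X Y R (u i) (v i)) -> G X Y R (op M s u) (op M s v).

Definition relator_conv (G : relT) : relT :=
  fun X Y R u v => G Y X (fun y x => R x y) v u.

Definition relator_inter (G1 G2 : relT) : relT :=
  fun X Y R u v => G1 X Y R u v /\ G2 X Y R u v.

Definition relator_sym (G : relT) : relT := relator_inter G (relator_conv G).

Record crel := mkCrel { cT : tm ar -> tm ar -> Prop; cV : val ar -> val ar -> Prop }.

Definition closed_rel (R : crel) : Prop :=
  (forall P Q, cT R P Q -> wf_tm 0 P = true /\ wf_tm 0 Q = true) /\
  (forall V W, cV R V W -> wf_val 0 V = true /\ wf_val 0 W = true).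

Definition lift_cval (RV : val ar -> val ar -> Prop) : rel (cval ar) (cval ar) :=
  fun v w => RV (proj1_sig v) (proj1_sig w).

Definition app_sim (D : relT) (R : crel) : Prop :=
  closed_rel R /\
  (forall P Q, cT R P Q -> D (cval ar) (cval ar) (lift_cval (cV R)) (sem P) (sem Q)) /\
  (forall V W, cV R V W -> forall U, wf_val 0 U = true -> cT R (App V U) (App W U)).

Definition similarity (D : relT) : crel :=
  mkCrel (fun P Q => exists R, app_sim D R /\ cT R P Q)
         (fun V W => exists R, app_sim D R /\ cV R V W).

Definition twoway_sim (G : relT) : crel :=
  mkCrel (fun P Q => cT (similarity G) P Q /\ cT (similarity G) Q P)
         (fun V W => cV (similarity G) V W /\ cV (similarity G) W V).

Definition bisimilarity (G : relT) : crel := similarity (relator_sym G).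

(* a triple (xbar, M, N) is represented as (n, M, N) with n = |xbar| *)
Record orel := mkOrel { oT : nat -> tm ar -> tm ar -> Prop;
                        oV : nat -> val ar -> val ar -> Prop }.

Definition is_lterm_rel (O : orel) : Prop :=
  (forall n P Q, oT O n P Q -> wf_tm n P = true /\ wf_tm n Q = true) /\
  (forall n V W, oV O n V W -> wf_val n V = true /\ wf_val n W = true).

Definition closing (n : nat) (sg : nat -> val ar) : Prop :=
  forall i, i < n -> wf_val 0 (sg i) = true.

Definition open_ext (R : crel) : orel :=
  mkOrel
    (fun n P Q => wf_tm n P = true /\ wf_tm n Q = true /\
       forall sg, closing n sg -> cT R (subst_tm sg P) (subst_tm sg Q))
    (fun n V W => wf_val n V = true /\ wf_val n W = true /\
       forall sg, closing n sg -> cV R (subst_val sg V) (subst_val sg W)).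

Definition compatible (O : orel) : Prop :=
  (forall n i, i < n -> oV O n (@Var _ ar i) (@Var _ ar i)) /\
  (forall n P Q, oT O (S n) P Q -> oV O n (Lam P) (Lam Q)) /\
  (forall n V W, oV O n V W -> oT O n (Ret V) (Ret W)) /\
  (forall n V V' W W', oV O n V V' -> oV O n W W' -> oT O n (App V W) (App V' W')) /\
  (forall n P P' Q Q', oT O n P P' -> oT O (S n) Q Q' -> oT O n (To P Q) (To P' Q')) /\
  (forall n s (f g : Fin.t (ar s) -> tm ar),
      (forall i, oT O n (f i) (g i)) -> oT O n (Op s f) (Op s g)).

Definition equivalence_orel (O : orel) : Prop :=
  (forall n P, wf_tm n P = true -> oT O n P P) /\
  (forall n V, wf_val n V = true -> oV O n V V) /\
  (forall n P Q, oT O n P Q -> oT O n Q P) /\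
  (forall n V W, oV O n V W -> oV O n W V) /\
  (forall n P Q R, oT O n P Q -> oT O n Q R -> oT O n P R) /\
  (forall n U V W, oV O n U V -> oV O n V W -> oV O n U W).

Definition congruence (O : orel) : Prop :=
  is_lterm_rel O /\ compatible O /\ equivalence_orel O.

Definition preadequate (D : relT) (O : orel) : Prop :=
  forall P Q, wf_tm 0 P = true -> wf_tm 0 Q = true -> oT O 0 P Q ->
    D (cval ar) (cval ar) (fun _ _ => True) (sem P) (sem Q).

Definition ctx_pre (D : relT) : orel :=
  mkOrel
    (fun n P Q => exists O, is_lterm_rel O /\ compatible O /\ preadequate D O /\ oT O n P Q)
    (fun n V W => exists O, is_lterm_rel O /\ compatible O /\ preadequate D O /\ oV O n V W).

Definition ctx_equiv (G : relT) : orel := ctx_pre (relator_sym G).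

Definition sub_orel (O1 O2 : orel) : Prop :=
  (forall n P Q, oT O1 n P Q -> oT O2 n P Q) /\
  (forall n V W, oV O1 n V W -> oV O2 n V W).

End Semantics.

(* Howe's method.  Applicative Γ-similarity ≾ is a preorder, and the crux is
   that its open extension ≾° is compatible.  Howe's extension H of ≾° is
   compatible by construction, contains ≾°, satisfies H;≾° ⊆ H and is closed
   under substitution.  Its closed part is an applicative Γ-simulation: by
   induction on n one shows M^(n) (Γ H) [[N]] whenever M H N, using that Γ is
   inductive (for ⊥ and for the lub [[M]] = ⊔ M^(n)), respects Σ, and commutes
   with return and bind as a relator.  Hence H ⊆ ≾°, so ≾° is compatible, and
   its symmetrisation, the open extension of two-way similarity, is a
   congruence; it is preadequate, hence contained in contextual equivalence.
   Finally a (Γ ∩ Γ^c)-simulation and its converse are both Γ-simulations, so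
   bisimilarity is contained in two-way similarity. *)
From Stdlib Require Vectors.Fin.
From Stdlib Require Import Arith Lia Bool FunctionalExtensionality Eqdep_dec.

Section Syntax.
Context {Sig : Type} {ar : Sig -> nat}.

Scheme tm_mut_ind := Induction for tm Sort Prop
with val_mut_ind := Induction for val Sort Prop.
Combined Scheme tm_val_ind from tm_mut_ind, val_mut_ind.

Lemma fin_all_iff k (p : Fin.t k -> bool) : fin_all k p = true <-> forall i, p i = true.
Proof.
  induction k as [|k IH]; simpl.
  - split; [intros _ i; apply (Fin.case0 (fun i => p i = true)) | auto].
  - rewrite andb_true_iff, IH. split.
    + intros [H1 H2] i. apply (Fin.caseS' i (fun i => p i = true)); auto.
    + intros H; split; [apply H | intros i; apply H].
Qed.

Lemma ren_ren :
  (forall (P : tm ar) r1 r2, ren_tm r1 (ren_tm r2 P) = ren_tm (fun i => r1 (r2 i)) P) /\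
  (forall (V : val ar) r1 r2, ren_val r1 (ren_val r2 V) = ren_val (fun i => r1 (r2 i)) V).
Proof.
  apply tm_val_ind; intros; simpl; try (f_equal; eauto; fail).
  - f_equal; auto. rewrite H0. f_equal. extensionality i; destruct i; reflexivity.
  - f_equal. extensionality i; auto.
  - f_equal. rewrite H. f_equal. extensionality i; destruct i; reflexivity.
Qed.

Lemma ren_subst :
  (forall (P : tm ar) r sg, ren_tm r (subst_tm sg P) = subst_tm (fun i => ren_val r (sg i)) P) /\
  (forall (V : val ar) r sg, ren_val r (subst_val sg V) = subst_val (fun i => ren_val r (sg i)) V).
Proof.
  apply tm_val_ind; intros; simpl; try (f_equal; eauto; fail).
  - f_equal; auto. rewrite H0. f_equal. extensionality i; destruct i; simpl; auto.
    rewrite !(proj2 ren_ren). reflexivity.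
  - f_equal. extensionality i; auto.
  - f_equal. rewrite H. f_equal. extensionality i; destruct i; simpl; auto.
    rewrite !(proj2 ren_ren). reflexivity.
Qed.

Lemma subst_ren :
  (forall (P : tm ar) r sg, subst_tm sg (ren_tm r P) = subst_tm (fun i => sg (r i)) P) /\
  (forall (V : val ar) r sg, subst_val sg (ren_val r V) = subst_val (fun i => sg (r i)) V).
Proof.
  apply tm_val_ind; intros; simpl; try (f_equal; eauto; fail).
  - f_equal; auto. rewrite H0. f_equal. extensionality i; destruct i; reflexivity.
  - f_equal. extensionality i; auto.
  - f_equal. rewrite H. f_equal. extensionality i; destruct i; reflexivity.
Qed.

Lemma subst_subst :
  (forall (P : tm ar) sg tau,
      subst_tm tau (subst_tm sg P) = subst_tm (fun i => subst_val tau (sg i)) P) /\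
  (forall (V : val ar) sg tau,
      subst_val tau (subst_val sg V) = subst_val (fun i => subst_val tau (sg i)) V).
Proof.
  apply tm_val_ind; intros; simpl; try (f_equal; eauto; fail).
  - f_equal; auto. rewrite H0. f_equal. extensionality i; destruct i; simpl; auto.
    rewrite (proj2 subst_ren), (proj2 ren_subst). reflexivity.
  - f_equal. extensionality i; auto.
  - f_equal. rewrite H. f_equal. extensionality i; destruct i; simpl; auto.
    rewrite (proj2 subst_ren), (proj2 ren_subst). reflexivity.
Qed.

Lemma ren_as_subst :
  (forall (P : tm ar) r, ren_tm r P = subst_tm (fun i => Var (r i)) P) /\
  (forall (V : val ar) r, ren_val r V = subst_val (fun i => Var (r i)) V).
Proof.
  apply tm_val_ind; intros; simpl; try (f_equal; eauto; fail).
  - f_equal; auto. rewrite H0. f_equal. extensionality i; destruct i; reflexivity.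
  - f_equal. extensionality i; auto.
  - f_equal. rewrite H. f_equal. extensionality i; destruct i; reflexivity.
Qed.

Lemma subst_wf_ext :
  (forall (P : tm ar) n sg sg', wf_tm n P = true ->
     (forall i, i < n -> sg i = sg' i) -> subst_tm sg P = subst_tm sg' P) /\
  (forall (V : val ar) n sg sg', wf_val n V = true ->
     (forall i, i < n -> sg i = sg' i) -> subst_val sg V = subst_val sg' V).
Proof.
  apply tm_val_ind; intros; simpl in *; try rewrite andb_true_iff in *;
    try (f_equal; intuition eauto; fail).
  - f_equal; [eapply H; intuition eauto|]. eapply H0; [intuition eauto|].
    intros [|i] Hi; simpl; auto. rewrite H2; auto; lia.
  - f_equal. extensionality i. rewrite fin_all_iff in H0. eauto.
  - apply H0, Nat.ltb_lt; auto.
  - f_equal. eapply H; eauto. intros [|i] Hi; simpl; auto. rewrite H1; auto; lia.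
Qed.

Lemma up_sub_var : up_sub (@Var _ ar) = Var.
Proof. extensionality i; destruct i; reflexivity. Qed.

Lemma subst_var :
  (forall P : tm ar, subst_tm Var P = P) /\ (forall V : val ar, subst_val Var V = V).
Proof.
  apply tm_val_ind; intros; simpl; rewrite ?up_sub_var; try (f_equal; eauto; fail).
  f_equal. extensionality i; auto.
Qed.

Lemma closed_subst_val (V : val ar) sg : wf_val 0 V = true -> subst_val sg V = V.
Proof.
  intros H. rewrite <- (proj2 subst_var V) at 2.
  eapply subst_wf_ext; eauto; intros; lia.
Qed.

Lemma wf_ren :
  (forall (P : tm ar) m n r, wf_tm m P = true ->
     (forall i, i < m -> r i < n) -> wf_tm n (ren_tm r P) = true) /\
  (forall (V : val ar) m n r, wf_val m V = true ->
     (forall i, i < m -> r i < n) -> wf_val n (ren_val r V) = true).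
Proof.
  apply tm_val_ind; intros; simpl in *; try rewrite andb_true_iff in *; try (intuition eauto; fail).
  - split; [intuition eauto|]. eapply H0; [intuition eauto|].
    intros [|i] Hi; simpl; [lia|]. specialize (H2 i); lia.
  - rewrite fin_all_iff in *. eauto.
  - apply Nat.ltb_lt in H. apply Nat.ltb_lt; auto.
  - eapply H; eauto. intros [|i] Hi; simpl; [lia|]. specialize (H1 i); lia.
Qed.

Lemma wf_subst :
  (forall (P : tm ar) m n sg, wf_tm m P = true ->
     (forall i, i < m -> wf_val n (sg i) = true) -> wf_tm n (subst_tm sg P) = true) /\
  (forall (V : val ar) m n sg, wf_val m V = true ->
     (forall i, i < m -> wf_val n (sg i) = true) -> wf_val n (subst_val sg V) = true).
Proof.
  assert (Hup : forall m n (sg : nat -> val ar), (forall i, i < m -> wf_val n (sg i) = true) ->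
            forall i, i < S m -> wf_val (S n) (up_sub sg i) = true).
  { intros m n sg H [|i] Hi; simpl; [apply Nat.ltb_lt; lia|].
    eapply (proj2 wf_ren); [apply H; lia|]. intros; lia. }
  apply tm_val_ind; intros; simpl in *; try rewrite andb_true_iff in *;
    try (intuition eauto; fail).
  - rewrite fin_all_iff in *. eauto.
  - apply Nat.ltb_lt in H. auto.
Qed.

End Syntax.

Section Semantics.
Context {Sig : Type} {ar : Sig -> nat} (M : CMonad ar) (HW : is_wcppo M).

Lemma leM_refl {X} (u : T M X) : le M u u. Proof. apply (HW X). Qed.
Lemma leM_trans {X} (u v w : T M X) : le M u v -> le M v w -> le M u w.
Proof. apply (HW X). Qed.
Lemma leM_antisym {X} (u v : T M X) : le M u v -> le M v u -> u = v.
Proof. apply (HW X). Qed.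
Lemma bot_leM {X} (u : T M X) : le M (bot M) u. Proof. apply (HW X). Qed.
Lemma lub_upper {X} (u : nat -> T M X) n : chain u -> le M (u n) (lub M u).
Proof. intros H. apply (HW X); auto. Qed.
Lemma lub_least {X} (u : nat -> T M X) z :
  chain u -> (forall n, le M (u n) z) -> le M (lub M u) z.
Proof. intros H. apply (HW X); auto. Qed.

Lemma chain_leM {X} (u : nat -> T M X) n m : chain u -> n <= m -> le M (u n) (u m).
Proof.
  intros Hc Hnm. induction Hnm; [apply leM_refl | eapply leM_trans; eauto].
Qed.

Lemma lub_leM {X} (u v : nat -> T M X) : chain u -> chain v ->
  (forall n, le M (u n) (v n)) -> le M (lub M u) (lub M v).
Proof.
  intros Hu Hv H. apply lub_least; auto. intros n.
  eapply leM_trans; [apply H | apply lub_upper; auto].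
Qed.

Lemma lub_const {X} (x : T M X) : lub M (fun _ => x) = x.
Proof.
  assert (Hc : chain (fun _ : nat => x)) by (intro; apply leM_refl).
  apply leM_antisym.
  - apply lub_least; auto using leM_refl.
  - apply (lub_upper (fun _ => x) 0); auto.
Qed.

Lemma lub_shift {X} (u : nat -> T M X) : chain u -> lub M u = lub M (fun n => u (S n)).
Proof.
  intros Hc. assert (Hc' : chain (fun n => u (S n))) by (intro n; apply Hc).
  apply leM_antisym.
  - apply lub_least; auto. intros n.
    eapply leM_trans; [apply Hc | apply (lub_upper (fun n => u (S n))); auto].
  - apply lub_least; auto. intros n. apply lub_upper; auto.
Qed.

Lemma lub_diag {X} (a : nat -> nat -> T M X) :
  (forall n k, le M (a n k) (a (S n) k)) -> (forall n k, le M (a n k) (a n (S k))) ->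
  lub M (fun n => lub M (fun k => a n k)) = lub M (fun n => a n n).
Proof.
  intros H1 H2.
  assert (Hrow : forall n, chain (fun k => a n k)) by (intros n k; apply H2).
  assert (Hdiag : chain (fun n => a n n)) by (intros n; eapply leM_trans; [apply H1 | apply H2]).
  assert (Hmono : forall n k n' k', n <= n' -> k <= k' -> le M (a n k) (a n' k')).
  { intros. eapply leM_trans.
    - apply (chain_leM (fun n => a n k) n n'); auto. intros m; apply H1.
    - apply (chain_leM (fun k => a n' k) k k'); auto. }
  assert (Hlubs : chain (fun n => lub M (fun k => a n k))) by (intros n; apply lub_leM; auto).
  apply leM_antisym.
  - apply lub_least; auto. intros n. apply lub_least; auto. intros k.
    eapply leM_trans; [apply (Hmono n k (max n k) (max n k)); lia |].
    apply (lub_upper (fun n => a n n)); auto.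
  - apply lub_leM; auto. intros n. apply (lub_upper (fun k => a n k)); auto.
Qed.

Context (HB : bind_continuous M) (HO : ops_continuous M).

Lemma approx_chain P : chain (fun k => approx M k P).
Proof.
  intros k. revert P. induction k; intros P; [apply bot_leM; auto |].
  destruct HB as (Hmono1 & Hmono2 & _).
  destruct P as [V | [i | P0] W | P1 P2 | s f]; simpl; try apply leM_refl; auto.
  - eapply leM_trans; [apply Hmono1, IHk | apply Hmono2; intros; apply IHk].
  - apply HO. intros; apply IHk.
Qed.

Lemma ret_sem_wf (V : val ar) (e : wf_val 0 V = true) : ret_sem M V = eta M (exist _ V e).
Proof.
  unfold ret_sem. generalize (@eq_refl _ (wf_val 0 V)).
  generalize (wf_val 0 V) at 2 3 as b. intros [|] E.
  - do 2 f_equal. apply UIP_dec, bool_dec.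
  - congruence.
Qed.

Lemma sem_unfold P : sem M P = lub M (fun k => approx M (S k) P).
Proof. apply lub_shift; auto using approx_chain. Qed.

Lemma sem_Ret (V : val ar) (e : wf_val 0 V = true) : sem M (Ret V) = eta M (exist _ V e).
Proof. rewrite sem_unfold. simpl. rewrite (ret_sem_wf V e). apply lub_const; auto. Qed.

Lemma sem_App_Lam (P : tm ar) W : sem M (App (Lam P) W) = sem M (subst1 W P).
Proof. apply sem_unfold. Qed.

Lemma sem_To (P R : tm ar) :
  sem M (To P R) = bind M (sem M P) (fun v => sem M (subst1 (proj1_sig v) R)).
Proof.
  destruct HB as (Hmono1 & Hmono2 & Hlub1 & Hlub2).
  rewrite sem_unfold. unfold sem at 1. rewrite Hlub1 by apply approx_chain. simpl.
  transitivity (lub M (fun n => lub M (fun k =>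
     bind M (approx M n P) (fun v => approx M k (subst1 (proj1_sig v) R))))).
  - symmetry. apply lub_diag; auto.
    + intros; apply Hmono1, approx_chain.
    + intros; apply Hmono2; intros; apply approx_chain.
  - f_equal. extensionality n. symmetry. apply Hlub2. intros; apply approx_chain.
Qed.

Lemma sem_Op s (f : Fin.t (ar s) -> tm ar) : sem M (Op s f) = op M s (fun i => sem M (f i)).
Proof.
  rewrite sem_unfold. simpl. symmetry.
  apply (proj2 HO (cval ar) s (fun n i => approx M n (f i))). intros; apply approx_chain.
Qed.

End Semantics.

Section OpenExtension.
Context {Sig : Type} {ar : Sig -> nat} (R : crel ar).

Lemma closing_subst m n (sg tau : nat -> val ar) :
  (forall i, i < m -> wf_val n (sg i) = true) -> closing n tau ->
  closing m (fun i => subst_val tau (sg i)).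
Proof. intros H Ht i Hi. eapply (proj2 wf_subst); eauto. Qed.

Lemma open_ext_subst_tm m n P Q sg : oT (open_ext R) m P Q ->
  (forall i, i < m -> wf_val n (sg i) = true) ->
  oT (open_ext R) n (subst_tm sg P) (subst_tm sg Q).
Proof.
  intros (HP & HQ & HPQ) Hsg. split; [|split]; [eapply (proj1 wf_subst); eauto .. |].
  intros tau Htau. rewrite !(proj1 subst_subst). apply HPQ. eapply closing_subst; eauto.
Qed.

Lemma open_ext_subst_val m n V W sg : oV (open_ext R) m V W ->
  (forall i, i < m -> wf_val n (sg i) = true) ->
  oV (open_ext R) n (subst_val sg V) (subst_val sg W).
Proof.
  intros (HV & HW & HVW) Hsg. split; [|split]; [eapply (proj2 wf_subst); eauto .. |].
  intros tau Htau. rewrite !(proj2 subst_subst). apply HVW. eapply closing_subst; eauto.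
Qed.

Lemma wf_var_ren m n r : (forall i, i < m -> r i < n) ->
  forall i, i < m -> wf_val n (@Var _ ar (r i)) = true.
Proof. intros Hr i Hi. apply Nat.ltb_lt; auto. Qed.

Lemma open_ext_ren_tm m n P Q r : oT (open_ext R) m P Q -> (forall i, i < m -> r i < n) ->
  oT (open_ext R) n (ren_tm r P) (ren_tm r Q).
Proof.
  intros HPQ Hr. rewrite !(proj1 ren_as_subst).
  eapply open_ext_subst_tm, wf_var_ren; eauto.
Qed.

Lemma open_ext_ren_val m n V W r : oV (open_ext R) m V W -> (forall i, i < m -> r i < n) ->
  oV (open_ext R) n (ren_val r V) (ren_val r W).
Proof.
  intros HVW Hr. rewrite !(proj2 ren_as_subst).
  eapply open_ext_subst_val, wf_var_ren; eauto.
Qed.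

Lemma open_ext0_tm P Q : oT (open_ext R) 0 P Q -> cT R P Q.
Proof.
  intros (_ & _ & H). specialize (H Var). rewrite !(proj1 subst_var) in H.
  apply H. intros i Hi; lia.
Qed.

Lemma open_ext0_val V W : oV (open_ext R) 0 V W -> cV R V W.
Proof.
  intros (_ & _ & H). specialize (H Var). rewrite !(proj2 subst_var) in H.
  apply H. intros i Hi; lia.
Qed.

Lemma closed_open_ext0_val V W :
  wf_val 0 V = true -> wf_val 0 W = true -> cV R V W -> oV (open_ext R) 0 V W.
Proof.
  intros HV HW H. split; [auto | split; [auto |]].
  intros sg _. rewrite !closed_subst_val; auto.
Qed.

End OpenExtension.

Lemma open_ext_mono {Sig : Type} {ar : Sig -> nat} (R S : crel ar) :
  (forall P Q, cT R P Q -> cT S P Q) -> (forall V W, cV R V W -> cV S V W) ->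
  sub_orel (open_ext R) (open_ext S).
Proof.
  intros HT HV. split; intros n P Q (HP & HQ & H); repeat split; auto.
Qed.

Definition crel_conv {Sig : Type} {ar : Sig -> nat} (R : crel ar) : crel ar :=
  mkCrel (fun P Q => cT R Q P) (fun V W => cV R W V).

Section Simulations.
Context {Sig : Type} {ar : Sig -> nat} (M : CMonad ar).

Lemma app_sim_relator_mono (D1 D2 : relT M) (R : crel ar) :
  (forall X Y (S : rel X Y) u v, D1 X Y S u v -> D2 X Y S u v) ->
  app_sim D1 R -> app_sim D2 R.
Proof. intros HD (Hc & Hsem & Happ). split; [|split]; auto. Qed.

Lemma app_sim_conv (G : relT M) (R : crel ar) :
  app_sim (relator_conv G) R -> app_sim G (crel_conv R).
Proof.
  intros ((HcT & HcV) & Hsem & Happ). split; [|split]; simpl; auto.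
  - split; intros ? ? H; [apply HcT in H | apply HcV in H]; tauto.
  - intros P Q H. exact (Hsem Q P H).
Qed.

Lemma bisimilarity_twoway_sim (G : relT M) :
  (forall P Q, cT (bisimilarity G) P Q -> cT (twoway_sim G) P Q) /\
  (forall V W, cV (bisimilarity G) V W -> cV (twoway_sim G) V W).
Proof.
  assert (Hsim : forall R, app_sim (relator_sym G) R -> app_sim G R).
  { intros R. apply app_sim_relator_mono. intros ? ? ? ? ? H; apply H. }
  assert (Hconv : forall R, app_sim (relator_sym G) R -> app_sim G (crel_conv R)).
  { intros R HR. apply app_sim_conv. revert HR.
    apply app_sim_relator_mono. intros ? ? ? ? ? H; apply H. }
  split; intros ? ? [R [HR H]]; split; [exists R | exists (crel_conv R) | exists R | exists (crel_conv R)];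
    auto.
Qed.

End Simulations.

Definition crel_comp {Sig : Type} {ar : Sig -> nat} (R S : crel ar) : crel ar :=
  mkCrel (fun P Q => exists P', cT R P P' /\ cT S P' Q)
         (fun V W => exists V', cV R V V' /\ cV S V' W).

Definition crel_diag {Sig : Type} (ar : Sig -> nat) : crel ar :=
  mkCrel (fun P Q => P = Q /\ wf_tm 0 P = true) (fun V W => V = W /\ wf_val 0 V = true).

Lemma ctx_pre_greatest {Sig : Type} {ar : Sig -> nat} {M : CMonad ar} (D : relT M) (O : orel ar) :
  is_lterm_rel O -> compatible O -> preadequate D O -> sub_orel O (ctx_pre D).
Proof. intros HO HC HP. split; intros n P Q H; exists O; auto. Qed.

Section Similarity.
Context {Sig : Type} {ar : Sig -> nat} (M : CMonad ar).
Context (G : relT M) (HG : is_relator G).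

Notation sim := (similarity G).
Notation osim := (open_ext (similarity G)).

Lemma relator_eq_refl X (u : T M X) : G X X (@eq X) u u.
Proof. destruct HG as (Hrefl & _); apply Hrefl. Qed.

Lemma relator_comp X Y Z (R : rel X Y) (S : rel Y Z) u v w :
  G X Y R u v -> G Y Z S v w -> G X Z (rcomp R S) u w.
Proof. destruct HG as (_ & Hcomp & _); apply Hcomp. Qed.

Lemma relator_mono X Y (R S : rel X Y) u v :
  (forall x y, R x y -> S x y) -> G X Y R u v -> G X Y S u v.
Proof. destruct HG as (_ & _ & _ & Hmono & _); apply Hmono. Qed.

Lemma relator_eta X Y (R : rel X Y) x y : R x y -> G X Y R (eta M x) (eta M y).
Proof. destruct HG as (_ & _ & _ & _ & Heta & _); apply Heta. Qed.

Lemma relator_bind X Y X' Y' (R : rel X Y) (S : rel X' Y') f g u v :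
  (forall x y, R x y -> G X' Y' S (f x) (g y)) ->
  G X Y R u v -> G X' Y' S (bind M u f) (bind M v g).
Proof. destruct HG as (_ & _ & _ & _ & _ & Hbind); apply Hbind. Qed.

Lemma similarity_app_sim : app_sim G sim.
Proof.
  split; [split | split].
  - intros P Q [R [[[HR _] _] HPQ]]. auto.
  - intros V W [R [[[_ HR] _] HVW]]. auto.
  - intros P Q [R [HR HPQ]]. eapply relator_mono; [| apply HR, HPQ].
    intros x y H. exists R. auto.
  - intros V W [R [HR HVW]] U HU. exists R. split; auto. apply HR; auto.
Qed.

Lemma sim_sem P Q : cT sim P Q -> G _ _ (lift_cval (cV sim)) (sem M P) (sem M Q).
Proof. apply similarity_app_sim. Qed.
Lemma sim_app V W U : cV sim V W -> wf_val 0 U = true -> cT sim (App V U) (App W U).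
Proof. intros; apply similarity_app_sim; auto. Qed.

Lemma crel_diag_app_sim : app_sim G (crel_diag ar).
Proof.
  split; [split | split].
  - intros P Q [-> H]; auto.
  - intros V W [-> H]; auto.
  - intros P Q [-> H]. eapply relator_mono; [| apply relator_eq_refl].
    intros x y ->. split; [auto | apply (proj2_sig y)].
  - intros V W [-> H] U HU. split; auto. simpl. rewrite H, HU; auto.
Qed.

Lemma crel_comp_app_sim R S : app_sim G R -> app_sim G S -> app_sim G (crel_comp R S).
Proof.
  intros ((HRt & HRv) & HRsem & HRapp) ((HSt & HSv) & HSsem & HSapp).
  split; [split | split].
  - intros P Q [P' [H1 H2]]. apply HRt in H1. apply HSt in H2. tauto.
  - intros V W [V' [H1 H2]]. apply HRv in H1. apply HSv in H2. tauto.
  - intros P Q [P' [H1 H2]].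
    eapply relator_mono; [| eapply relator_comp; [apply HRsem, H1 | apply HSsem, H2]].
    intros x y [z [Hz1 Hz2]]. exists (proj1_sig z). auto.
  - intros V W [V' [H1 H2]] U HU. exists (App V' U). auto.
Qed.

Lemma sim_refl_tm P : wf_tm 0 P = true -> cT sim P P.
Proof. intros. exists (crel_diag ar). split; [apply crel_diag_app_sim | split; auto]. Qed.
Lemma sim_refl_val V : wf_val 0 V = true -> cV sim V V.
Proof. intros. exists (crel_diag ar). split; [apply crel_diag_app_sim | split; auto]. Qed.

Lemma sim_comp_app_sim : app_sim G (crel_comp sim sim).
Proof. apply crel_comp_app_sim; apply similarity_app_sim. Qed.

Lemma sim_trans_tm P Q R : cT sim P Q -> cT sim Q R -> cT sim P R.
Proof. intros. exists (crel_comp sim sim). split; [apply sim_comp_app_sim | exists Q; auto]. Qed.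
Lemma sim_trans_val U V W : cV sim U V -> cV sim V W -> cV sim U W.
Proof. intros. exists (crel_comp sim sim). split; [apply sim_comp_app_sim | exists V; auto]. Qed.

Lemma osim_refl_tm n P : wf_tm n P = true -> oT osim n P P.
Proof.
  intros H. repeat split; auto. intros sg Hsg. apply sim_refl_tm.
  eapply (proj1 wf_subst); eauto.
Qed.
Lemma osim_refl_val n V : wf_val n V = true -> oV osim n V V.
Proof.
  intros H. repeat split; auto. intros sg Hsg. apply sim_refl_val.
  eapply (proj2 wf_subst); eauto.
Qed.
Lemma osim_trans_tm n P Q R : oT osim n P Q -> oT osim n Q R -> oT osim n P R.
Proof.
  intros (H1 & _ & H3) (_ & H5 & H6). repeat split; auto.
  intros; eapply sim_trans_tm; eauto.
Qed.
Lemma osim_trans_val n U V W : oV osim n U V -> oV osim n V W -> oV osim n U W.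
Proof.
  intros (H1 & _ & H3) (_ & H5 & H6). repeat split; auto.
  intros; eapply sim_trans_val; eauto.
Qed.

Section Howe.
Context (HW : is_wcppo M) (HB : bind_continuous M) (HO : ops_continuous M).
Context (Hind : inductive G) (Hres : respects_sigma G).

(* Howe's extension of open similarity: the least relation closed under the
   compatibility rules in which every rule is followed by one step of [osim]. *)
Inductive howe_tm : nat -> tm ar -> tm ar -> Prop :=
| howe_Ret n V V' Q :
    howe_val n V V' -> oT osim n (Ret V') Q -> howe_tm n (Ret V) Q
| howe_App n V V' W W' Q :
    howe_val n V V' -> howe_val n W W' -> oT osim n (App V' W') Q -> howe_tm n (App V W) Q
| howe_To n P P' R R' Q :
    howe_tm n P P' -> howe_tm (S n) R R' -> oT osim n (To P' R') Q -> howe_tm n (To P R) Q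
| howe_Op n s (f g : Fin.t (ar s) -> tm ar) Q :
    (forall i, howe_tm n (f i) (g i)) -> oT osim n (Op s g) Q -> howe_tm n (Op s f) Q
with howe_val : nat -> val ar -> val ar -> Prop :=
| howe_Var n i W : i < n -> oV osim n (Var i) W -> howe_val n (Var i) W
| howe_Lam n P P' W : howe_tm (S n) P P' -> oV osim n (Lam P') W -> howe_val n (Lam P) W.

Scheme howe_tm_mut_ind := Induction for howe_tm Sort Prop
with howe_val_mut_ind := Induction for howe_val Sort Prop.
Combined Scheme howe_ind from howe_tm_mut_ind, howe_val_mut_ind.

Lemma howe_wf :
  (forall n P Q, howe_tm n P Q -> wf_tm n P = true /\ wf_tm n Q = true) /\
  (forall n V W, howe_val n V W -> wf_val n V = true /\ wf_val n W = true).
Proof.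
  apply howe_ind; intros; simpl;
    repeat match goal with
           | Ho : oT osim _ _ _ |- _ => destruct Ho as (? & ? & _)
           | Ho : oV osim _ _ _ |- _ => destruct Ho as (? & ? & _)
           end;
    simpl in *; rewrite ?andb_true_iff in *; intuition auto.
  rewrite fin_all_iff; intros i; apply H.
Qed.

Lemma howe_osim_trans :
  (forall n P Q, howe_tm n P Q -> forall R, oT osim n Q R -> howe_tm n P R) /\
  (forall n V W, howe_val n V W -> forall U, oV osim n W U -> howe_val n V U).
Proof.
  apply howe_ind; intros; econstructor; eauto;
    solve [eapply osim_trans_tm; eauto | eapply osim_trans_val; eauto].
Qed.

Lemma howe_refl :
  (forall P n, wf_tm n P = true -> howe_tm n P P) /\
  (forall V n, wf_val n V = true -> howe_val n V V).
Proof.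
  apply tm_val_ind; intros; simpl in *; rewrite ?andb_true_iff in *.
  - econstructor; eauto. apply osim_refl_tm; auto.
  - econstructor; [apply H | apply H0 | apply osim_refl_tm]; simpl; rewrite ?andb_true_iff; tauto.
  - econstructor; [apply H | apply H0 | apply osim_refl_tm]; simpl; rewrite ?andb_true_iff; tauto.
  - rewrite fin_all_iff in H0.
    econstructor; [intros i; apply H, H0 | apply osim_refl_tm]. simpl; rewrite fin_all_iff; auto.
  - econstructor; [apply Nat.ltb_lt; auto | apply osim_refl_val; auto].
  - econstructor; eauto. apply osim_refl_val; auto.
Qed.

Lemma osim_howe_tm n P Q : oT osim n P Q -> howe_tm n P Q.
Proof. intros H. eapply (proj1 howe_osim_trans); [apply howe_refl, H | exact H]. Qed.
Lemma osim_howe_val n V W : oV osim n V W -> howe_val n V W.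
Proof. intros H. eapply (proj2 howe_osim_trans); [apply howe_refl, H | exact H]. Qed.

Lemma howe_ren :
  (forall m P Q, howe_tm m P Q -> forall n r, (forall i, i < m -> r i < n) ->
     howe_tm n (ren_tm r P) (ren_tm r Q)) /\
  (forall m V W, howe_val m V W -> forall n r, (forall i, i < m -> r i < n) ->
     howe_val n (ren_val r V) (ren_val r W)).
Proof.
  assert (Hup : forall m n r, (forall i, i < m -> r i < n) ->
            forall i, i < S m -> up_ren r i < S n).
  { intros m n r H [|i] Hi; simpl; [lia |]. specialize (H i); lia. }
  apply howe_ind; intros; simpl.
  - econstructor; eauto. eapply (open_ext_ren_tm _ _ _ (Ret V') Q); eauto.
  - econstructor; eauto. eapply (open_ext_ren_tm _ _ _ (App V' W') Q); eauto.
  - econstructor; eauto. eapply (open_ext_ren_tm _ _ _ (To P' R') Q); eauto.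
  - apply howe_Op with (g := fun i => ren_tm r (g i)); [intros i; eauto |].
    eapply (open_ext_ren_tm _ _ _ (Op s g) Q); eauto.
  - econstructor; eauto. eapply (open_ext_ren_val _ _ _ (Var i) W); eauto.
  - econstructor; eauto. eapply (open_ext_ren_val _ _ _ (Lam P') W); eauto.
Qed.

Lemma howe_subst :
  (forall m P Q, howe_tm m P Q -> forall n sg sg', (forall i, i < m -> howe_val n (sg i) (sg' i)) ->
     howe_tm n (subst_tm sg P) (subst_tm sg' Q)) /\
  (forall m V W, howe_val m V W -> forall n sg sg', (forall i, i < m -> howe_val n (sg i) (sg' i)) ->
     howe_val n (subst_val sg V) (subst_val sg' W)).
Proof.
  assert (Hwf : forall m n (sg sg' : nat -> val ar), (forall i, i < m -> howe_val n (sg i) (sg' i)) ->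
            forall i, i < m -> wf_val n (sg' i) = true).
  { intros m n sg sg' H i Hi. apply (proj2 howe_wf _ _ _ (H i Hi)). }
  assert (Hup : forall m n (sg sg' : nat -> val ar), (forall i, i < m -> howe_val n (sg i) (sg' i)) ->
            forall i, i < S m -> howe_val (S n) (up_sub sg i) (up_sub sg' i)).
  { intros m n sg sg' H [|i] Hi; simpl.
    - apply howe_refl. simpl. apply Nat.ltb_lt; lia.
    - eapply (proj2 howe_ren); [apply H; lia |]. intros; lia. }
  apply howe_ind; intros; simpl.
  - econstructor; eauto. eapply (open_ext_subst_tm _ _ _ (Ret V') Q); eauto.
  - econstructor; eauto. eapply (open_ext_subst_tm _ _ _ (App V' W') Q); eauto.
  - econstructor; eauto. eapply (open_ext_subst_tm _ _ _ (To P' R') Q); eauto.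
  - apply howe_Op with (g := fun i => subst_tm sg' (g i)); [intros i; eauto |].
    eapply (open_ext_subst_tm _ _ _ (Op s g) Q); eauto.
  - eapply (proj2 howe_osim_trans); [apply H; auto |].
    eapply (open_ext_subst_val _ _ _ (Var i) W); eauto.
  - econstructor; eauto. eapply (open_ext_subst_val _ _ _ (Lam P') W); eauto.
Qed.

Lemma howe_subst1 (P Q : tm ar) V W :
  howe_tm 1 P Q -> howe_val 0 V W -> howe_tm 0 (subst1 V P) (subst1 W Q).
Proof.
  intros HPQ HVW. eapply (proj1 howe_subst); eauto.
  intros [|i] Hi; simpl; [auto | lia].
Qed.

Notation howe_lift := (lift_cval (howe_val 0)).

Lemma relator_howe_sim_trans (u v w : T M (cval ar)) :
  G _ _ howe_lift u v -> G _ _ (lift_cval (cV sim)) v w -> G _ _ howe_lift u w.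
Proof.
  intros H1 H2. eapply relator_mono; [| eapply relator_comp; [apply H1 | apply H2]].
  intros x y [z [Hxz Hzy]]. eapply (proj2 howe_osim_trans); [apply Hxz |].
  apply closed_open_ext0_val; [apply (proj2_sig z) | apply (proj2_sig y) | exact Hzy].
Qed.

(* [inductive G] disposes of [bot]; every other case first moves along [osim]
   from [Q] to the term built by the last Howe rule, then matches one step. *)
Lemma howe_approx_sem k P Q :
  howe_tm 0 P Q -> G _ _ howe_lift (approx M k P) (sem M Q).
Proof.
  revert P Q. induction k; intros P Q H; [apply Hind |].
  inversion H as [n0 V V' Q0 HV HQ | n0 V V' W W' Q0 HV HW' HQ
                 | n0 P1 P1' P2 P2' Q0 HP1 HP2 HQ | n0 s f g Q0 Hfg HQ]; subst;
    simpl; try (eapply relator_howe_sim_trans; [| apply sim_sem, open_ext0_tm; eauto]).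
  - destruct (proj2 howe_wf _ _ _ HV) as [e e'].
    rewrite (ret_sem_wf M V e), (sem_Ret M HW HB HO V' e'). apply relator_eta. exact HV.
  - destruct V as [i | P0]; [apply Hind |].
    inversion HV as [| n1 P1 P' W1 HP HLam]; subst.
    eapply relator_howe_sim_trans; [apply IHk, howe_subst1; eauto |].
    rewrite <- (sem_App_Lam M HW HB HO).
    apply sim_sem, sim_app; [apply open_ext0_val; auto | apply (proj2 howe_wf _ _ _ HW')].
  - rewrite (sem_To M HW HB HO). eapply relator_bind; [| apply IHk; eauto].
    intros x y Hxy. apply IHk, howe_subst1; auto.
  - rewrite (sem_Op M HW HB HO). apply Hres. intros i; apply IHk; auto.
Qed.

Lemma howe_sem P Q : howe_tm 0 P Q -> G _ _ howe_lift (sem M P) (sem M Q).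
Proof.
  intros H. apply Hind; [apply (approx_chain M HW HB HO) |].
  intros k; apply howe_approx_sem; auto.
Qed.

Lemma howe_app_sim : app_sim G (mkCrel (howe_tm 0) (howe_val 0)).
Proof.
  split; [split | split]; simpl; try apply howe_wf; [apply howe_sem |].
  intros V W H U HU. econstructor; [apply H | apply howe_refl; auto |].
  apply osim_refl_tm. simpl. rewrite HU, (proj2 (proj2 howe_wf _ _ _ H)). auto.
Qed.

Lemma howe_osim :
  (forall n P Q, howe_tm n P Q -> oT osim n P Q) /\
  (forall n V W, howe_val n V W -> oV osim n V W).
Proof.
  assert (Hclosing : forall n sg, closing n sg -> forall i, i < n -> howe_val 0 (sg i) (sg i)).
  { intros n sg Hsg i Hi. apply howe_refl, Hsg, Hi. }
  split; intros n P Q H; pose proof H as Hwf; apply howe_wf in Hwf;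
    repeat split; try tauto; intros sg Hsg;
    exists (mkCrel (howe_tm 0) (howe_val 0)); split; try apply howe_app_sim; simpl.
  - eapply (proj1 howe_subst); eauto.
  - eapply (proj2 howe_subst); eauto.
Qed.

Lemma osim_compatible : compatible osim.
Proof.
  destruct howe_osim as [HT HV].
  split; [| split; [| split; [| split; [| split]]]].
  - intros n i Hi. apply osim_refl_val. simpl. apply Nat.ltb_lt; auto.
  - intros n P Q H. apply HV. econstructor; [apply osim_howe_tm, H |].
    apply osim_refl_val. apply H.
  - intros n V W H. apply HT. econstructor; [apply osim_howe_val, H |].
    apply osim_refl_tm. apply H.
  - intros n V V' W W' H1 H2. apply HT.
    econstructor; [apply osim_howe_val, H1 | apply osim_howe_val, H2 |].
    apply osim_refl_tm. simpl. rewrite (proj1 (proj2 H1)), (proj1 (proj2 H2)). auto.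
  - intros n P P' Q Q' H1 H2. apply HT.
    econstructor; [apply osim_howe_tm, H1 | apply osim_howe_tm, H2 |].
    apply osim_refl_tm. simpl. rewrite (proj1 (proj2 H1)), (proj1 (proj2 H2)). auto.
  - intros n s f g H. apply HT. econstructor; [intros i; apply osim_howe_tm, H |].
    apply osim_refl_tm. simpl. apply fin_all_iff. intros i; apply H.
Qed.

End Howe.
End Similarity.

Section TwoWaySimilarity.
Context {Sig : Type} {ar : Sig -> nat} (M : CMonad ar) (G : relT M).

Notation osim := (open_ext (similarity G)).
Notation tw := (open_ext (twoway_sim G)).

Lemma open_ext_twoway_tm n P Q : oT tw n P Q <-> oT osim n P Q /\ oT osim n Q P.
Proof.
  split.
  - intros (HP & HQ & H). repeat split; auto; intros sg Hsg; apply H; auto.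
  - intros [(HP & HQ & H1) (_ & _ & H2)]. repeat split; auto.
Qed.

Lemma open_ext_twoway_val n V W : oV tw n V W <-> oV osim n V W /\ oV osim n W V.
Proof.
  split.
  - intros (HV & HW & H). repeat split; auto; intros sg Hsg; apply H; auto.
  - intros [(HV & HW & H1) (_ & _ & H2)]. repeat split; auto.
Qed.

Lemma twoway_lterm_rel : is_lterm_rel tw.
Proof. split; intros n P Q (HP & HQ & _); auto. Qed.

Context (HG : is_relator G).

Lemma twoway_equivalence : equivalence_orel tw.
Proof.
  split; [| split; [| split; [| split; [| split]]]].
  - intros n P H. apply open_ext_twoway_tm. split; apply (osim_refl_tm M G HG); auto.
  - intros n V H. apply open_ext_twoway_val. split; apply (osim_refl_val M G HG); auto.
  - intros n P Q H. apply open_ext_twoway_tm in H. apply open_ext_twoway_tm. tauto.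
  - intros n V W H. apply open_ext_twoway_val in H. apply open_ext_twoway_val. tauto.
  - intros n P Q R H1 H2. apply open_ext_twoway_tm in H1, H2. apply open_ext_twoway_tm.
    split; eapply (osim_trans_tm M G HG); intuition eauto.
  - intros n U V W H1 H2. apply open_ext_twoway_val in H1, H2. apply open_ext_twoway_val.
    split; eapply (osim_trans_val M G HG); intuition eauto.
Qed.

Context (HW : is_wcppo M) (HB : bind_continuous M) (HO : ops_continuous M).
Context (Hind : inductive G) (Hres : respects_sigma G).

Lemma twoway_compatible : compatible tw.
Proof.
  destruct (osim_compatible M G HG HW HB HO Hind Hres) as (Hvar & Hlam & Hret & Happ & Hto & Hop).
  split; [| split; [| split; [| split; [| split]]]].
  - intros n i Hi. apply open_ext_twoway_val. auto.
  - intros n P Q H. apply open_ext_twoway_tm in H. apply open_ext_twoway_val.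
    split; apply Hlam; tauto.
  - intros n V W H. apply open_ext_twoway_val in H. apply open_ext_twoway_tm.
    split; apply Hret; tauto.
  - intros n V V' W W' H1 H2. apply open_ext_twoway_val in H1, H2. apply open_ext_twoway_tm.
    split; apply Happ; tauto.
  - intros n P P' Q Q' H1 H2. apply open_ext_twoway_tm in H1, H2. apply open_ext_twoway_tm.
    split; apply Hto; tauto.
  - intros n s f g H. apply open_ext_twoway_tm.
    split; apply Hop; intros i; apply (open_ext_twoway_tm n (f i) (g i)), H.
Qed.

Lemma twoway_congruence : congruence tw.
Proof. split; [apply twoway_lterm_rel | split; [apply twoway_compatible | apply twoway_equivalence]]. Qed.

Lemma twoway_preadequate : preadequate (relator_sym G) tw.
Proof.
  intros P Q _ _ H. apply open_ext_twoway_tm in H. destruct H as [HPQ HQP].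
  apply open_ext0_tm, (sim_sem M G HG) in HPQ. apply open_ext0_tm, (sim_sem M G HG) in HQP.
  split; [eapply (relator_mono M G HG); [| apply HPQ] | eapply (relator_mono M G HG); [| apply HQP]]; auto.
Qed.

Lemma twoway_ctx_equiv : sub_orel tw (ctx_equiv G).
Proof.
  apply ctx_pre_greatest; [apply twoway_lterm_rel | apply twoway_compatible | apply twoway_preadequate].
Qed.

Lemma bisimilarity_ctx_equiv : sub_orel (open_ext (bisimilarity G)) (ctx_equiv G).
Proof.
  destruct (bisimilarity_twoway_sim M G) as [HT HV].
  destruct (open_ext_mono _ _ HT HV) as [HoT HoV].
  destruct twoway_ctx_equiv as [HcT HcV].
  split; auto.
Qed.

End TwoWaySimilarity.

Theorem mainTheorem15 (Sig : Type) (ar : Sig -> nat) (M : CMonad ar)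
  (HM : continuous_sigma_monad M)
  (G : relT M) (HG : is_relator G) (Hind : inductive G) (Hres : respects_sigma G) :
  congruence (open_ext (twoway_sim G)) /\
  sub_orel (open_ext (twoway_sim G)) (ctx_equiv G) /\
  sub_orel (open_ext (bisimilarity G)) (ctx_equiv G).
Proof.
  destruct HM as (_ & HW & HB & HO).
  split; [| split].
  - exact (twoway_congruence M G HG HW HB HO Hind Hres).
  - exact (twoway_ctx_equiv M G HG HW HB HO Hind Hres).
  - exact (bisimilarity_ctx_equiv M G HG HW HB HO Hind Hres).
Qed.
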